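(* Let $(A,\mathcal N,\mathcal P,\lambda)$ be a game and $(\sigma,\phi)$ a uniform strategy on it such that uniformity is local: for all $x\in\mathrm{Conf}(\sigma)$ and $\alpha\in\mathcal N$, if $\alpha$ fixes $p_\sigma(x)$ then $\phi_\alpha$ fixes $x$. Then $(\sigma,\mathcal S_\phi(\sigma))$, with projection $p_\sigma$, is a $\sim$-strategy on the thin concurrent game $(A,\mathcal S,\mathcal S_+,\mathcal S_-)$, where $\mathcal S_-=\mathcal S_{\mathcal N}(A)$, $\mathcal S_+=\mathcal S_{\mathcal P}(A)$ and $\mathcal S$ is the closure of $\mathcal S_-\cup\mathcal S_+$ under composition.
   Context: Event structure: a set with a partial order $\leq$ with finitely many elements below each element, an irreflexive symmetric hereditary conflict $\#$ (if $a\leq a'$, $a\#b$ then $a'\#b$), and polarity into $\{-,+\}$. Configurations: finite down-closed conflict-free subsets, $\mathrm{Conf}(\cdot)$. $x\subseteq^+y$ (resp. $\subseteq^-$): $x\subseteq y$ with $y\setminus x$ all positive (resp. negative). Map of event structures: polarity-preserving function mapping configurations to configurations and injective on each configuration. A function $h$ fixes a set $x$ if $h(a)=a$ for all $a\in x$. Automorphism: bijection preserving and reflecting $\leq,\#$, polarity; negative if whenever it fixes a configuration $x$ and $x\subseteq^+y$ it fixes $y$; positive likewise with $\subseteq^-$. Group actions are homomorphisms into automorphism groups. A game $(A,\mathcal N,\mathcal P,\lambda)$: $\mathcal N$ a group acting on $A$ by negative automorphisms, $\mathcal P$ by positive automorphisms, $\lambda:\mathcal N\times\mathcal P\to\mathcal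 P\times\mathcal N$ with (i) $\lambda(e,\beta)=(\beta,e)$, $\lambda(\alpha,e)=(e,\alpha)$; (ii) if $\lambda(\alpha',\beta)=(\beta_1,\alpha_1)$, $\lambda(\alpha,\beta_1)=(\beta_2,\alpha_2)$ then $\lambda(\alpha\alpha',\beta)=(\beta_2,\alpha_2\alpha_1)$; (iii) if $\lambda(\alpha,\beta)=(\beta_1,\alpha_1)$, $\lambda(\alpha_1,\beta')=(\beta_2,\alpha_2)$ then $\lambda(\alpha,\beta\beta')=(\beta_1\beta_2,\alpha_2)$; (iv) if $\lambda(\alpha,\beta)=(\beta',\alpha')$ then $\alpha(\beta(a))=\beta'(\alpha'(a))$ for all $a$. For a group $G$ acting on $A$, $\mathcal S_G(A)$ is the set of bijections $x\cong g(x)$ ($x\in\mathrm{Conf}(A)$, $g\in G$) obtained by restricting $g$ to $x$. Strategy on $A$: event structure $\sigma$ with map $p_\sigma:\sigma\to A$ such that for every $x\in\mathrm{Conf}(\sigma)$: if $p_\sigma(x)\subseteq^-z$ there is a unique $y\in\mathrm{Conf}(\sigma)$ with $x\subseteq y$, $p_\sigma(y)=z$; if $z\subseteq^+p_\sigma(x)$ there is $y\subseteq x$ in $\mathrm{Conf}(\sigma)$ with $p_\sigma(y)=z$. Weak map $\sigma\to\tau$: a map $f$ with $f[x]\in\mathcal P$ ($x\in\mathrm{Conf}(\sigma)$) such that $f[x](p_\tau(f(s)))=p_\sigma(s)$ for $s\in x$. $\alpha\cdot\sigma$ is $\sigma$ with projection $\alpha\circ p_\sigma$. Uniform strategy: strategy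 $\sigma$ with weak maps $\phi_\alpha:\alpha\cdot\sigma\to\sigma$ ($\alpha\in\mathcal N$) such that for all $x$: $\phi_e(x)=x$, $\phi_e[x]=e$; and for all $\alpha,\alpha'$, with $y=\phi_\alpha(x)$, $(\gamma,\beta)=\lambda(\alpha',\phi_\alpha[x])$: $\phi_{\alpha'\alpha}(x)=\phi_\beta(y)$ and $\phi_{\alpha'\alpha}[x]=\gamma\,\phi_\beta[y]$. $\mathcal S_\phi(\sigma)$ is the set of bijections $x\cong\phi_\alpha(x)$ obtained by restricting $\phi_\alpha$ to $x\in\mathrm{Conf}(\sigma)$, for $\alpha\in\mathcal N$. For bijections $\theta:x\cong y$, $\theta':x'\cong y'$ between configurations: $\theta\subseteq\theta'$ if $x\subseteq x'$ and $\theta'|_x=\theta$; $\theta\subseteq^{\pm}\theta'$ if moreover $x\subseteq^{\pm}x'$. An isomorphism family on $E$: a set of polarity-preserving bijections between configurations, containing identities, closed under composition and inverse, closed under restriction to subconfigurations, and such that each $\theta:x\cong y$ extends to some $\theta'\supseteq\theta$ in the family on any configuration $x'\supseteq x$. An event structure with symmetry is a pair $(E,\mathcal S_E)$; a map of such $(E,\mathcal S_E)\to(F,\mathcal S_F)$ is a map of event structures $f$ such that for every $\theta:x\cong y$ in $\mathcal S_E$ the bijection $f(a)\mapsto f(\theta(a))$, $f(x)\cong f(y)$, lies in $\mathcal S_F$. A thin concurrent game is an event structure with isomorphism families $\mathcal S,\mathcal S_+,\mathcal S_-$, $\mathcal S_\pm\subseteq\mathcal S$, such that $\mathcal S_+\cap\mathcal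 S_-$ consists of identities, $\theta\in\mathcal S_+$ and $\theta\subseteq^+\theta'\in\mathcal S$ imply $\theta'\in\mathcal S_+$, and $\theta\in\mathcal S_-$ and $\theta\subseteq^-\theta'\in\mathcal S$ imply $\theta'\in\mathcal S_-$. A $\sim$-strategy on a thin concurrent game $(A,\mathcal S,\mathcal S_+,\mathcal S_-)$ is an event structure with symmetry $(\sigma,\mathcal S_\sigma)$ with a map of event structures with symmetry $p:(\sigma,\mathcal S_\sigma)\to(A,\mathcal S)$ that is a strategy on $A$ and satisfies: (thinness) if $x\in\mathrm{Conf}(\sigma)$ and $\mathrm{id}_x\subseteq^+\theta\in\mathcal S_\sigma$ then $\theta=\mathrm{id}_{x'}$ for some $x'$; ($\sim$-receptivity) if $x\subseteq^-y$ and $x\subseteq^-z$ in $\mathrm{Conf}(\sigma)$ and there is $\theta:p(y)\cong p(z)$ in $\mathcal S$ with $\mathrm{id}_{p(x)}\subseteq\theta$, then there is $\chi:y\cong z$ in $\mathcal S_\sigma$ with $\mathrm{id}_x\subseteq\chi$ and $p\chi=\theta$, where $p\chi$ denotes the bijection $p(s)\mapsto p(\chi(s))$. *)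

From Stdlib Require Import List.
Unset Implicit Arguments.

Definition set_eq {E} (x y : E -> Prop) := forall a, x a <-> y a.
Definition subset {E} (x y : E -> Prop) := forall a, x a -> y a.
Definition image {E F} (f : E -> F) (x : E -> Prop) : F -> Prop :=
  fun b => exists a, x a /\ b = f a.

Definition pbij (E : Type) := E -> E -> Prop.
Definition dom {E} (t : pbij E) : E -> Prop := fun a => exists b, t a b.
Definition cod {E} (t : pbij E) : E -> Prop := fun b => exists a, t a b.
Definition rel_eq {E} (t u : pbij E) := forall a b, t a b <-> u a b.
Definition id_on {E} (x : E -> Prop) : pbij E := fun a b => x a /\ b = a.
Definition restr {E} (g : E -> E) (x : E -> Prop) : pbij E :=
  fun a b => x a /\ b = g a.
Definition bcomp {E} (t2 t1 : pbij E) : pbij E :=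
  fun a c => exists b, t1 a b /\ t2 b c.
Definition binv {E} (t : pbij E) : pbij E := fun a b => t b a.
Definition brestrict {E} (t : pbij E) (x : E -> Prop) : pbij E :=
  fun a b => x a /\ t a b.
Definition push {E F} (f : E -> F) (t : pbij E) : pbij F :=
  fun c d => exists a b, t a b /\ c = f a /\ d = f b.
Definition is_bij {E} (t : pbij E) (x y : E -> Prop) :=
  (forall a b b', t a b -> t a b' -> b = b') /\
  (forall a a' b, t a b -> t a' b -> a = a') /\
  set_eq (dom t) x /\ set_eq (cod t) y.

Record ES (E : Type) := mkES {
  leq : E -> E -> Prop;
  cfl : E -> E -> Prop;
  pol : E -> bool  (* true = positive (+), false = negative (-) *) }.
Arguments leq {E} _ _ _.
Arguments cfl {E} _ _ _.
Arguments pol {E} _ _.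

Definition is_ES {E} (A : ES E) : Prop :=
  (forall a, leq A a a) /\
  (forall a b, leq A a b -> leq A b a -> a = b) /\
  (forall a b c, leq A a b -> leq A b c -> leq A a c) /\
  (forall e, exists l : list E, forall e', leq A e' e <-> In e' l) /\
  (forall a, ~ cfl A a a) /\
  (forall a b, cfl A a b -> cfl A b a) /\
  (forall a a' b, leq A a a' -> cfl A a b -> cfl A a' b).

Definition config {E} (A : ES E) (x : E -> Prop) : Prop :=
  (exists l : list E, forall e, x e <-> In e l) /\
  (forall a b, leq A a b -> x b -> x a) /\
  (forall a b, x a -> x b -> ~ cfl A a b).

Definition subpos {E} (A : ES E) (x y : E -> Prop) :=
  subset x y /\ forall a, y a -> ~ x a -> pol A a = true.
Definition subneg {E} (A : ES E) (x y : E -> Prop) :=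
  subset x y /\ forall a, y a -> ~ x a -> pol A a = false.

Definition es_map {E F} (A : ES E) (B : ES F) (f : E -> F) : Prop :=
  (forall a, pol B (f a) = pol A a) /\
  (forall x, config A x -> config B (image f x)) /\
  (forall x, config A x -> forall a b, x a -> x b -> f a = f b -> a = b).

Definition fixes {E} (h : E -> E) (x : E -> Prop) := forall a, x a -> h a = a.

Definition automorphism {E} (A : ES E) (h : E -> E) : Prop :=
  (exists h', (forall a, h' (h a) = a) /\ (forall a, h (h' a) = a)) /\
  (forall a b, leq A (h a) (h b) <-> leq A a b) /\
  (forall a b, cfl A (h a) (h b) <-> cfl A a b) /\
  (forall a, pol A (h a) = pol A a).

Definition neg_automorphism {E} (A : ES E) (h : E -> E) : Prop :=
  automorphism A h /\
  forall x y, config A x -> config A y -> fixes h x -> subpos A x y -> fixes h y.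
Definition pos_automorphism {E} (A : ES E) (h : E -> E) : Prop :=
  automorphism A h /\
  forall x y, config A x -> config A y -> fixes h x -> subneg A x y -> fixes h y.

Record Group := mkGroup {
  gcar :> Type;
  gmul : gcar -> gcar -> gcar;
  gone : gcar;
  ginv : gcar -> gcar;
  gmulA : forall a b c, gmul a (gmul b c) = gmul (gmul a b) c;
  gmul1l : forall a, gmul gone a = a;
  gmul1r : forall a, gmul a gone = a;
  gmulVl : forall a, gmul (ginv a) a = gone;
  gmulVr : forall a, gmul a (ginv a) = gone }.
Arguments gmul G _ _ : rename.

Definition is_action {E} (A : ES E) (G : Group) (act : G -> E -> E) : Prop :=
  (forall a, act (gone G) a = a) /\
  (forall g h a, act (gmul G g h) a = act g (act h a)) /\
  (forall g, automorphism A (act g)).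

Definition is_game {E} (A : ES E) (N P : Group)
  (actN : N -> E -> E) (actP : P -> E -> E) (lam : N -> P -> P * N) : Prop :=
  is_ES A /\
  is_action A N actN /\ (forall al, neg_automorphism A (actN al)) /\
  is_action A P actP /\ (forall be, pos_automorphism A (actP be)) /\
  (* (i) *)
  (forall be, lam (gone N) be = (be, gone N)) /\
  (forall al, lam al (gone P) = (gone P, al)) /\
  (* (ii) *)
  (forall al al' be be1 al1 be2 al2,
     lam al' be = (be1, al1) -> lam al be1 = (be2, al2) ->
     lam (gmul N al al') be = (be2, gmul N al2 al1)) /\
  (* (iii) *)
  (forall al be be' be1 al1 be2 al2,
     lam al be = (be1, al1) -> lam al1 be' = (be2, al2) ->
     lam al (gmul P be be') = (gmul P be1 be2, al2)) /\
  (* (iv) *)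
  (forall al be be' al', lam al be = (be', al') ->
     forall a, actN al (actP be a) = actP be' (actN al' a)).

Definition S_act {E} (A : ES E) (G : Group) (act : G -> E -> E) : pbij E -> Prop :=
  fun t => exists g x, config A x /\ rel_eq t (restr (act g) x).

Inductive comp_closure {E} (S1 S2 : pbij E -> Prop) : pbij E -> Prop :=
| cc_l : forall t u, S1 u -> rel_eq t u -> comp_closure S1 S2 t
| cc_r : forall t u, S2 u -> rel_eq t u -> comp_closure S1 S2 t
| cc_comp : forall t t1 t2, comp_closure S1 S2 t1 -> comp_closure S1 S2 t2 ->
    set_eq (cod t1) (dom t2) -> rel_eq t (bcomp t2 t1) -> comp_closure S1 S2 t.

Definition is_strategy {E S} (A : ES E) (sg : ES S) (p : S -> E) : Prop :=
  is_ES sg /\ es_map sg A p /\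
  forall x, config sg x ->
    (forall z, config A z -> subneg A (image p x) z ->
       exists y, config sg y /\ subset x y /\ set_eq (image p y) z /\
         forall y', config sg y' -> subset x y' -> set_eq (image p y') z ->
           set_eq y' y) /\
    (forall z, config A z -> subpos A z (image p x) ->
       exists y, config sg y /\ subset y x /\ set_eq (image p y) z).

(* weak map alpha.sigma -> sigma given by (f, f[-]) *)
Definition weak_map_act {E S} (A : ES E) (sg : ES S) (p : S -> E) (P : Group)
  (actP : P -> E -> E) (al_act : E -> E) (f : S -> S) (fb : (S -> Prop) -> P) : Prop :=
  es_map sg sg f /\
  forall x, config sg x -> forall s, x s -> actP (fb x) (p (f s)) = al_act (p s).

Definition is_uniform {E S} (A : ES E) (N P : Group)
  (actN : N -> E -> E) (actP : P -> E -> E) (lam : N -> P -> P * N)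
  (sg : ES S) (p : S -> E)
  (phi : N -> S -> S) (phib : N -> (S -> Prop) -> P) : Prop :=
  is_strategy A sg p /\
  (forall al, weak_map_act A sg p P actP (actN al) (phi al) (phib al)) /\
  (forall x, config sg x ->
     set_eq (image (phi (gone N)) x) x /\ phib (gone N) x = gone P) /\
  (forall al al' x, config sg x ->
     let y := image (phi al) x in
     let ga := fst (lam al' (phib al x)) in
     let be := snd (lam al' (phib al x)) in
     set_eq (image (phi (gmul N al' al)) x) (image (phi be) y) /\
     phib (gmul N al' al) x = gmul P ga (phib be y)).

Definition S_phi {S} (sg : ES S) (N : Group) (phi : N -> S -> S) : pbij S -> Prop :=
  fun t => exists al x, config sg x /\ rel_eq t (restr (phi al) x).

Definition sub_bij {E} (t t' : pbij E) :=
  subset (dom t) (dom t') /\ forall a b, dom t a -> (t' a b <-> t a b).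
Definition sub_bij_pos {E} (A : ES E) (t t' : pbij E) :=
  sub_bij t t' /\ subpos A (dom t) (dom t').
Definition sub_bij_neg {E} (A : ES E) (t t' : pbij E) :=
  sub_bij t t' /\ subneg A (dom t) (dom t').

Definition iso_family {E} (A : ES E) (F : pbij E -> Prop) : Prop :=
  (forall t, F t -> exists x y, config A x /\ config A y /\ is_bij t x y /\
       forall a b, t a b -> pol A a = pol A b) /\
  (forall x, config A x -> F (id_on x)) /\
  (forall t1 t2, F t1 -> F t2 -> set_eq (cod t1) (dom t2) -> F (bcomp t2 t1)) /\
  (forall t, F t -> F (binv t)) /\
  (forall t x, F t -> config A x -> subset x (dom t) -> F (brestrict t x)) /\
  (forall t x', F t -> config A x' -> subset (dom t) x' ->
     exists t', F t' /\ sub_bij t t' /\ set_eq (dom t') x').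

Definition es_sym_map {E F} (A : ES E) (SA : pbij E -> Prop)
  (B : ES F) (SB : pbij F -> Prop) (f : E -> F) : Prop :=
  es_map A B f /\ forall t, SA t -> SB (push f t).

Definition thin_game {E} (A : ES E) (Sy Sp Sm : pbij E -> Prop) : Prop :=
  is_ES A /\ iso_family A Sy /\ iso_family A Sp /\ iso_family A Sm /\
  (forall t, Sp t -> Sy t) /\ (forall t, Sm t -> Sy t) /\
  (forall t, Sp t -> Sm t -> exists x, rel_eq t (id_on x)) /\
  (forall t t', Sp t -> sub_bij_pos A t t' -> Sy t' -> Sp t') /\
  (forall t t', Sm t -> sub_bij_neg A t t' -> Sy t' -> Sm t').

Definition sim_strategy {E S} (A : ES E) (Sy : pbij E -> Prop)
  (sg : ES S) (Ssg : pbij S -> Prop) (p : S -> E) : Prop :=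
  is_ES sg /\ iso_family sg Ssg /\
  es_sym_map sg Ssg A Sy p /\
  is_strategy A sg p /\
  (* thinness *)
  (forall x t, config sg x -> sub_bij_pos sg (id_on x) t -> Ssg t ->
     exists x', rel_eq t (id_on x')) /\
  (* ~-receptivity *)
  (forall x y z t, config sg x -> config sg y -> config sg z ->
     subneg sg x y -> subneg sg x z ->
     Sy t -> set_eq (dom t) (image p y) -> set_eq (cod t) (image p z) ->
     sub_bij (id_on (image p x)) t ->
     exists c, Ssg c /\ set_eq (dom c) y /\ set_eq (cod c) z /\
       sub_bij (id_on x) c /\ rel_eq (push p c) t).

(* The three families S_-, S_+ and S_phi(sigma) consist of restrictions to configurations of maps
   drawn from a set that is closed, on each configuration, under identity, composition and
   inverse; any such set generates an isomorphism family.  By axiom (iv), every composite of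
   elements of S_- and S_+ is the restriction of a single map [actP be \o actN al], so S has the
   same shape.  Everything else rests on one fact: a negative automorphism agreeing with a
   positive one on a configuration fixes it.  This shows that S_+ and S_- only share identities
   and gives the extension axioms of thin games; with locality of phi it gives thinness of sigma,
   and for ~-receptivity it makes the bijection of S to be lifted negative, so that it lifts to
   phi_al, whose image is then identified with the target by uniqueness of negative extensions. *)

From Stdlib Require Import List Classical Lia Setoid Morphisms.

#[local] Instance set_eq_equiv {E} : Equivalence (@set_eq E).
Proof.
  split; unfold set_eq.
  - intros x a; reflexivity.
  - intros x y H a; symmetry; apply H.
  - intros x y z H1 H2 a; rewrite H1; apply H2.
Qed.

#[local] Instance rel_eq_equiv {E} : Equivalence (@rel_eq E).
Proof.
  split; unfold rel_eq.
  - intros t a b; reflexivity.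
  - intros t u H a b; symmetry; apply H.
  - intros t u v H1 H2 a b; rewrite H1; apply H2.
Qed.

#[local] Instance dom_proper {E} : Proper (rel_eq ==> set_eq) (@dom E).
Proof. intros t u H; unfold set_eq, dom, rel_eq in *; setoid_rewrite H; reflexivity. Qed.

#[local] Instance cod_proper {E} : Proper (rel_eq ==> set_eq) (@cod E).
Proof. intros t u H; unfold set_eq, cod, rel_eq in *; setoid_rewrite H; reflexivity. Qed.

#[local] Instance restr_proper {E} (h : E -> E) : Proper (set_eq ==> rel_eq) (restr h).
Proof. intros x y H; unfold rel_eq, set_eq, restr in *; setoid_rewrite H; reflexivity. Qed.

#[local] Instance bcomp_proper {E} : Proper (rel_eq ==> rel_eq ==> rel_eq) (@bcomp E).
Proof.
  intros t2 u2 H2 t1 u1 H1; unfold rel_eq, bcomp in *.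
  setoid_rewrite H1; setoid_rewrite H2; reflexivity.
Qed.

#[local] Instance binv_proper {E} : Proper (rel_eq ==> rel_eq) (@binv E).
Proof. intros t u H a b; apply H. Qed.

#[local] Instance brestrict_proper {E} : Proper (rel_eq ==> set_eq ==> rel_eq) (@brestrict E).
Proof.
  intros t u Ht x y Hx; unfold rel_eq, set_eq, brestrict in *.
  setoid_rewrite Ht; setoid_rewrite Hx; reflexivity.
Qed.

#[local] Instance push_proper {E F} (f : E -> F) : Proper (rel_eq ==> rel_eq) (push f).
Proof. intros t u H; unfold rel_eq, push in *; setoid_rewrite H; reflexivity. Qed.

#[local] Instance subset_proper {E} : Proper (set_eq ==> set_eq ==> iff) (@subset E).
Proof.
  intros x x' Hx y y' Hy; unfold subset, set_eq in *.
  setoid_rewrite Hx; setoid_rewrite Hy; reflexivity.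
Qed.

#[local] Instance sub_bij_proper {E} : Proper (rel_eq ==> rel_eq ==> iff) (@sub_bij E).
Proof.
  intros t u Ht t' u' Ht'; unfold sub_bij, subset, dom, rel_eq in *.
  setoid_rewrite Ht; setoid_rewrite Ht'; reflexivity.
Qed.

#[local] Instance is_bij_proper {E} : Proper (rel_eq ==> set_eq ==> set_eq ==> iff) (@is_bij E).
Proof.
  intros t u Ht x x' Hx y y' Hy; unfold is_bij, set_eq, dom, cod, rel_eq in *.
  setoid_rewrite Ht; setoid_rewrite Hx; setoid_rewrite Hy; reflexivity.
Qed.

#[local] Instance subpos_proper {E} (A : ES E) : Proper (set_eq ==> set_eq ==> iff) (subpos A).
Proof.
  intros x x' Hx y y' Hy; unfold subpos, subset, set_eq in *.
  setoid_rewrite Hx; setoid_rewrite Hy; reflexivity.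
Qed.

#[local] Instance subneg_proper {E} (A : ES E) : Proper (set_eq ==> set_eq ==> iff) (subneg A).
Proof.
  intros x x' Hx y y' Hy; unfold subneg, subset, set_eq in *.
  setoid_rewrite Hx; setoid_rewrite Hy; reflexivity.
Qed.

Lemma dom_restr {E} (h : E -> E) x : set_eq (dom (restr h x)) x.
Proof. intro a; split; [intros [b [Ha _]]; exact Ha | intro Ha; exists (h a); split; auto]. Qed.

Lemma cod_restr {E} (h : E -> E) x : set_eq (cod (restr h x)) (image h x).
Proof. intro b; split; intros [a [Ha Hb]]; exists a; split; auto. Qed.

Lemma dom_id {E} (x : E -> Prop) : set_eq (dom (id_on x)) x.
Proof. exact (dom_restr (fun a => a) x). Qed.

Lemma image_fixes {E} (h : E -> E) x : fixes h x -> set_eq (image h x) x.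
Proof.
  intros Hfix b; split.
  - intros [a [Ha ->]]; rewrite Hfix; auto.
  - intros Hb; exists b; rewrite Hfix; auto.
Qed.

Lemma image_comp_eq_on {E F} (p : E -> F) (f : E -> E) (g : F -> F) y :
  (forall s, y s -> p (f s) = g (p s)) -> set_eq (image p (image f y)) (image g (image p y)).
Proof.
  intros Hpf c; split.
  - intros (b & (s & Hs & ->) & ->); exists (p s); split; [exists s; auto | apply Hpf, Hs].
  - intros (b & (s & Hs & ->) & ->); exists (f s).
    split; [exists s; auto | symmetry; apply Hpf, Hs].
Qed.

Lemma restr_eq_on {E} (h h' : E -> E) x :
  (forall a, x a -> h a = h' a) -> rel_eq (restr h x) (restr h' x).
Proof. intros H a b; split; intros [Ha ->]; split; auto; symmetry; auto. Qed.

Lemma restr_fixes {E} (h : E -> E) x : fixes h x -> rel_eq (restr h x) (id_on x).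
Proof. exact (restr_eq_on h (fun a => a) x). Qed.

Lemma bcomp_restr {E} (h1 h2 : E -> E) x1 x2 :
  set_eq (image h1 x1) x2 ->
  rel_eq (bcomp (restr h2 x2) (restr h1 x1)) (restr (fun a => h2 (h1 a)) x1).
Proof.
  intros Hx2 a c; split.
  - intros (b & [Ha ->] & [_ ->]); split; auto.
  - intros [Ha ->]; exists (h1 a); repeat split; auto.
    apply Hx2; exists a; auto.
Qed.

Lemma binv_restr {E} (h h' : E -> E) x :
  (forall a, x a -> h' (h a) = a) -> rel_eq (binv (restr h x)) (restr h' (image h x)).
Proof.
  intros Hinv b a; split.
  - intros [Ha ->]; split; [exists a; auto | symmetry; apply Hinv, Ha].
  - intros [(c & Hc & ->) ->]; rewrite Hinv by exact Hc; split; auto.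
Qed.

Lemma brestrict_restr {E} (h : E -> E) x y :
  subset y x -> rel_eq (brestrict (restr h x) y) (restr h y).
Proof. intros Hyx a b; split; [intros [Ha [_ ->]] | intros [Ha ->]]; repeat split; auto. Qed.

Lemma sub_bij_restr {E} (h h' : E -> E) x x' :
  sub_bij (restr h x) (restr h' x') <-> subset x x' /\ forall a, x a -> h' a = h a.
Proof.
  split; intros [Hsub Hag]; split.
  - intros a Ha; apply (dom_restr h' x'), Hsub, (dom_restr h x), Ha.
  - intros a Ha.
    assert (Hd : dom (restr h x) a) by (apply (dom_restr h x), Ha).
    destruct (proj2 (Hag a (h a) Hd) (conj Ha eq_refl)) as [_ Hh]; symmetry; exact Hh.
  - intros a Ha; apply (dom_restr h x) in Ha; apply (dom_restr h' x'), Hsub, Ha.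
  - intros a b Ha; apply (dom_restr h x) in Ha; unfold restr.
    rewrite Hag by exact Ha; split; intros [_ ->]; auto.
Qed.

Lemma sub_bij_id_restr {E} (h : E -> E) x x' :
  sub_bij (id_on x) (restr h x') <-> subset x x' /\ fixes h x.
Proof. exact (sub_bij_restr (fun a => a) h x x'). Qed.

Lemma push_restr {E F} (p : E -> F) (f : E -> E) (g : F -> F) y :
  (forall s, y s -> p (f s) = g (p s)) -> rel_eq (push p (restr f y)) (restr g (image p y)).
Proof.
  intros Hpf c d; split.
  - intros (a & b & [Ha ->] & -> & ->); split; [exists a; auto | apply Hpf, Ha].
  - intros [(a & Ha & ->) ->]; exists a, (f a); repeat split; auto; symmetry; apply Hpf, Ha.
Qed.

Lemma subpos_image {E F} (A : ES E) (B : ES F) (f : E -> F) x y :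
  (forall a, pol B (f a) = pol A a) -> subpos A x y -> subpos B (image f x) (image f y).
Proof.
  intros Hpol [Hsub Hpos]; split.
  - intros b (a & Ha & ->); exists a; auto.
  - intros b (a & Ha & ->) Hn; rewrite Hpol; apply Hpos; auto.
    intro Hxa; apply Hn; exists a; auto.
Qed.

Lemma subneg_image {E F} (A : ES E) (B : ES F) (f : E -> F) x y :
  (forall a, pol B (f a) = pol A a) -> subneg A x y -> subneg B (image f x) (image f y).
Proof.
  intros Hpol [Hsub Hneg]; split.
  - intros b (a & Ha & ->); exists a; auto.
  - intros b (a & Ha & ->) Hn; rewrite Hpol; apply Hneg; auto.
    intro Hxa; apply Hn; exists a; auto.
Qed.

Lemma config_down_closed_subset {E} (A : ES E) x y :
  config A x -> subset y x -> (forall a b, leq A a b -> y b -> y a) -> config A y.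
Proof.
  intros ([l Hl] & _ & Hcf) Hyx Hdown; split; [|split; [exact Hdown|]].
  - assert (Hfilter : exists l', forall e, In e l' <-> In e l /\ y e).
    { clear Hl; induction l as [|a l [l' Hl']].
      - exists nil; simpl; tauto.
      - destruct (classic (y a)) as [Hya | Hya]; [exists (a :: l') | exists l'];
          intro e; simpl; rewrite Hl'; intuition congruence. }
    destruct Hfilter as [l' Hl']; exists l'; intro e; rewrite Hl', <- Hl; intuition.
  - intros a b Ha Hb; apply Hcf; auto.
Qed.

Definition es_lt {E} (A : ES E) (b a : E) : Prop := leq A b a /\ b <> a.

Lemma list_remove_elem {T} (l : list T) a : In a l ->
  exists l', length l' < length l /\ forall e, In e l -> e <> a -> In e l'.
Proof.
  induction l as [|c l IH]; simpl; [tauto|]; intros Ha.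
  destruct (classic (c = a)) as [-> | Hca].
  - exists l; split; [lia|]; intros e [-> | He] Hne; tauto.
  - destruct Ha as [-> | Ha]; [tauto|].
    destruct (IH Ha) as (l' & Hlen & Hin); exists (c :: l'); simpl; split; [lia|].
    intros e [-> | He] Hne; auto.
Qed.

Lemma es_lt_wf {E} (A : ES E) : is_ES A -> well_founded (es_lt A).
Proof.
  intros (Hrefl & Hanti & Htrans & Hfin & _).
  assert (Hacc : forall n a l, length l <= n -> (forall e, leq A e a -> In e l) -> Acc (es_lt A) a).
  { induction n as [|n IH]; intros a l Hlen Hin.
    - destruct l; [destruct (Hin a (Hrefl a)) | simpl in Hlen; lia].
    - constructor; intros b [Hba Hne].
      destruct (list_remove_elem l a (Hin a (Hrefl a))) as (l' & Hlen' & Hin').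
      apply (IH b l'); [lia|]; intros e Heb.
      apply Hin'; [apply Hin; eauto|]; intros ->; apply Hne, Hanti; auto. }
  intro a; destruct (Hfin a) as [l Hl].
  apply (Hacc (length l) a l); [lia | intro e; apply Hl].
Qed.

Lemma config_down {E} (A : ES E) a : is_ES A -> config A (fun b => leq A b a).
Proof.
  intros (_ & _ & Htrans & Hfin & Hirr & Hsym & Hher); split; [|split].
  - destruct (Hfin a) as [l Hl]; exists l; exact Hl.
  - intros b c Hbc Hca; eauto.
  - intros b c Hb Hc Hbc; apply (Hirr a), (Hher c a a Hc), Hsym, (Hher b a c Hb), Hbc.
Qed.

Lemma config_strict_down {E} (A : ES E) a : is_ES A -> config A (fun b => es_lt A b a).
Proof.
  intros HA; apply (config_down_closed_subset A (fun b => leq A b a));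
    [apply config_down, HA | now intros b [] |].
  destruct HA as (_ & Hanti & Htrans & _); intros b c Hbc [Hca Hne]; split; eauto.
  intros ->; apply Hne, Hanti; auto.
Qed.

(* Induction along the causal order: an event is fixed by [f] as soon as its strict past is, since
   [f] extends fixed points across positive events and [g], agreeing with [f], across negative
   ones. *)
Lemma neg_pos_agree_fixes {E} (A : ES E) f g x :
  is_ES A -> neg_automorphism A f -> pos_automorphism A g -> config A x ->
  (forall a, x a -> f a = g a) -> fixes f x.
Proof.
  intros HA [_ Hf] [_ Hg] Hx Hfg a.
  induction a as [a IH] using (well_founded_ind (es_lt_wf A HA)); intros Hxa.
  pose proof HA as (Hrefl & _).
  assert (Hpast : forall b, leq A b a -> x b) by (intros b Hb; exact (proj1 (proj2 Hx) b a Hb Hxa)).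
  assert (Hf_lt : fixes f (fun b => es_lt A b a)) by (intros b Hb; apply IH, Hpast, Hb; exact Hb).
  assert (Hg_lt : fixes g (fun b => es_lt A b a)).
  { intros b Hb; rewrite <- Hfg by (apply Hpast, Hb); apply Hf_lt, Hb. }
  assert (Hext : forall b, leq A b a -> ~ es_lt A b a -> pol A b = pol A a).
  { intros b Hb Hn; destruct (classic (b = a)) as [-> | Hne]; [reflexivity|].
    contradiction (Hn (conj Hb Hne)). }
  assert (Hsub : subset (fun b => es_lt A b a) (fun b => leq A b a)) by now intros b [].
  pose proof (config_strict_down A a HA) as Hlt; pose proof (config_down A a HA) as Hle.
  destruct (pol A a) eqn:Hpa.
  - apply (Hf _ _ Hlt Hle Hf_lt); [|apply Hrefl].
    split; [exact Hsub | intros b Hb Hn; rewrite Hext; auto].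
  - rewrite Hfg by exact Hxa.
    apply (Hg _ _ Hlt Hle Hg_lt); [|apply Hrefl].
    split; [exact Hsub | intros b Hb Hn; rewrite Hext; auto].
Qed.

Lemma automorphism_comp {E} (A : ES E) f g :
  automorphism A f -> automorphism A g -> automorphism A (fun a => f (g a)).
Proof.
  intros ([f' [Hf1 Hf2]] & Hfle & Hfcf & Hfpol) ([g' [Hg1 Hg2]] & Hgle & Hgcf & Hgpol).
  split; [|split; [|split]].
  - exists (fun a => g' (f' a)); split; intro a; [rewrite Hf1 | rewrite Hg2]; auto.
  - intros a b; rewrite Hfle; auto.
  - intros a b; rewrite Hfcf; auto.
  - intro a; rewrite Hfpol; auto.
Qed.

Lemma automorphism_es_map {E} (A : ES E) h : automorphism A h -> es_map A A h.
Proof.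
  intros ([h' [Hl Hr]] & Hle & Hcf & Hpol); split; [exact Hpol | split].
  - intros x ([l Hl0] & Hdown & Hcfx); split; [|split].
    + exists (map h l); intro e; rewrite in_map_iff; unfold image.
      split; intros [a [H1 H2]]; exists a; split; try apply Hl0; auto.
    + intros a b Hab (c & Hc & ->); exists (h' a); split; [|auto].
      apply (Hdown _ c); auto; apply Hle; rewrite Hr; auto.
    + intros a b (c & Hc & ->) (d & Hd & ->) H; apply (Hcfx c d); auto; apply Hcf; auto.
  - intros x _ a b _ _ Hab; rewrite <- (Hl a), <- (Hl b), Hab; reflexivity.
Qed.

Lemma act_one {E} (A : ES E) G act : is_action A G act -> forall a, act (gone G) a = a.
Proof. intros H; apply H. Qed.

Lemma act_mul {E} (A : ES E) G act :
  is_action A G act -> forall g h a, act (gmul G g h) a = act g (act h a).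
Proof. intros H; apply H. Qed.

Lemma act_invK {E} (A : ES E) G act : is_action A G act -> forall g a, act (ginv G g) (act g a) = a.
Proof. intros H g a; rewrite <- (act_mul A G act H), gmulVl; apply (act_one A G act H). Qed.

Lemma act_Kinv {E} (A : ES E) G act : is_action A G act -> forall g a, act g (act (ginv G g) a) = a.
Proof. intros H g a; rewrite <- (act_mul A G act H), gmulVr; apply (act_one A G act H). Qed.

Lemma act_inj {E} (A : ES E) G act : is_action A G act -> forall g a b, act g a = act g b -> a = b.
Proof.
  intros H g a b Hab; rewrite <- (act_invK A G act H g a), Hab; apply (act_invK A G act H).
Qed.

Definition restr_family {E I} (A : ES E) (f : I -> E -> E) : pbij E -> Prop :=
  fun t => exists i x, config A x /\ rel_eq t (restr (f i) x).

Lemma restr_is_bij {E} (A : ES E) h x :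
  es_map A A h -> config A x -> is_bij (restr h x) x (image h x).
Proof.
  intros (_ & _ & Hinj) Hx; split; [|split; [|split; [apply dom_restr | apply cod_restr]]].
  - intros a b b' [_ ->] [_ ->]; reflexivity.
  - intros a a' b [Ha ->] [Ha' Heq]; exact (Hinj x Hx a a' Ha Ha' Heq).
Qed.

Lemma iso_family_ext {E} (A : ES E) (F G : pbij E -> Prop) :
  (forall t, F t <-> G t) -> iso_family A F -> iso_family A G.
Proof.
  intros HFG (Hbij & Hid & Hcomp & Hinv & Hres & Hext).
  split; [|split; [|split; [|split; [|split]]]].
  - intros t Ht; apply Hbij, HFG, Ht.
  - intros x Hx; apply HFG, Hid, Hx.
  - intros t1 t2 H1 H2 Hcd; apply HFG, Hcomp; [apply HFG, H1 | apply HFG, H2 | exact Hcd].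
  - intros t Ht; apply HFG, Hinv, HFG, Ht.
  - intros t x Ht Hx Hsub; apply HFG, Hres; [apply HFG, Ht | exact Hx | exact Hsub].
  - intros t x' Ht Hx' Hsub; destruct (Hext t x' (proj2 (HFG t) Ht) Hx' Hsub) as (t' & Ht' & Hrest).
    exists t'; split; [apply HFG, Ht' | exact Hrest].
Qed.

Lemma restr_family_iso {E I} (A : ES E) (f : I -> E -> E) :
  (forall i, es_map A A (f i)) ->
  (forall x, config A x -> exists i, fixes (f i) x) ->
  (forall i j x, config A x -> exists k, forall a, x a -> f k a = f j (f i a)) ->
  (forall i x, config A x -> exists j, forall a, x a -> f j (f i a) = a) ->
  iso_family A (restr_family A f).
Proof.
  intros Hmap Hid Hcomp Hinv; split; [|split; [|split; [|split; [|split]]]].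
  - intros t (i & x & Hx & Ht); exists x, (image (f i) x).
    split; [exact Hx | split; [apply Hmap, Hx | split]].
    + rewrite Ht; apply (restr_is_bij A); auto.
    + intros a b Hab; apply Ht in Hab as [_ ->]; symmetry; apply Hmap.
  - intros x Hx; destruct (Hid x Hx) as [i Hi]; exists i, x; split; [exact Hx|].
    symmetry; apply restr_fixes, Hi.
  - intros t1 t2 (i & x1 & Hx1 & Ht1) (j & x2 & Hx2 & Ht2) Hcd.
    destruct (Hcomp i j x1 Hx1) as [k Hk]; exists k, x1; split; [exact Hx1|].
    rewrite Ht1, Ht2 in *; rewrite cod_restr, dom_restr in Hcd.
    rewrite bcomp_restr by exact Hcd; symmetry; apply restr_eq_on, Hk.
  - intros t (i & x & Hx & Ht); destruct (Hinv i x Hx) as [j Hj].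
    exists j, (image (f i) x); split; [apply Hmap, Hx|].
    rewrite Ht; apply binv_restr, Hj.
  - intros t y (i & x & Hx & Ht) Hy Hyx; exists i, y; split; [exact Hy|].
    rewrite Ht in *; rewrite dom_restr in Hyx; apply brestrict_restr, Hyx.
  - intros t x' (i & x & Hx & Ht) Hx' Hxx'; exists (restr (f i) x').
    split; [exists i, x'; split; [exact Hx' | reflexivity]|].
    split; [|apply dom_restr].
    rewrite Ht in *; rewrite dom_restr in Hxx'; apply sub_bij_restr; split; auto.
Qed.

Lemma action_iso_family {E} (A : ES E) G act : is_action A G act -> iso_family A (S_act A G act).
Proof.
  intros Hact; apply (restr_family_iso A act).
  - intro g; apply automorphism_es_map, Hact.
  - intros x _; exists (gone G); intros a _; apply (act_one A G act Hact).
  - intros g h x _; exists (gmul G h g); intros a _; apply (act_mul A G act Hact).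
  - intros g x _; exists (ginv G g); intros a _; apply (act_invK A G act Hact).
Qed.

Lemma strategy_neg_ext_unique {E S} (A : ES E) (sg : ES S) (p : S -> E) x y1 y2 :
  is_strategy A sg p -> config sg x -> config sg y1 -> config sg y2 ->
  subset x y1 -> subset x y2 -> subneg A (image p x) (image p y2) ->
  set_eq (image p y1) (image p y2) -> set_eq y1 y2.
Proof.
  intros (_ & Hp & Hrec) Hx Hy1 Hy2 Hxy1 Hxy2 Hneg Hpy.
  destruct (proj1 (Hrec x Hx) (image p y2) (proj1 (proj2 Hp) y2 Hy2) Hneg)
    as (y & _ & _ & _ & Huniq).
  rewrite (Huniq y1 Hy1 Hxy1 Hpy), (Huniq y2 Hy2 Hxy2 (reflexivity _)); reflexivity.
Qed.

Section Game.

Context {E : Type} (A : ES E) (N P : Group)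
  (actN : N -> E -> E) (actP : P -> E -> E) (lam : N -> P -> P * N).
Hypothesis game : is_game A N P actN actP lam.

Let Sm := S_act A N actN.
Let Sp := S_act A P actP.
Let Sy := comp_closure Sm Sp.

Lemma game_ES : is_ES A. Proof. apply game. Qed.
Lemma actionN : is_action A N actN. Proof. apply game. Qed.
Lemma actionP : is_action A P actP. Proof. apply game. Qed.
Lemma actN_neg al : neg_automorphism A (actN al). Proof. apply game. Qed.
Lemma actP_pos be : pos_automorphism A (actP be). Proof. apply game. Qed.
Lemma actN_aut al : automorphism A (actN al). Proof. apply actN_neg. Qed.
Lemma actP_aut be : automorphism A (actP be). Proof. apply actP_pos. Qed.
Lemma lam_one_r al : lam al (gone P) = (gone P, al). Proof. apply game. Qed.

Lemma lam_mul_r al be be' be1 al1 be2 al2 :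
  lam al be = (be1, al1) -> lam al1 be' = (be2, al2) ->
  lam al (gmul P be be') = (gmul P be1 be2, al2).
Proof. apply game. Qed.

Lemma lam_act al be be' al' :
  lam al be = (be', al') -> forall a, actN al (actP be a) = actP be' (actN al' a).
Proof. apply game. Qed.

Let actN_one := act_one A N actN actionN.
Let actP_one := act_one A P actP actionP.
Let actN_mul := act_mul A N actN actionN.
Let actP_mul := act_mul A P actP actionP.
Let actN_invK := act_invK A N actN actionN.
Let actP_invK := act_invK A P actP actionP.
Let actP_Kinv := act_Kinv A P actP actionP.

Lemma actN_pol al a : pol A (actN al a) = pol A a. Proof. apply (actN_aut al). Qed.

Definition mixed_act (g : P * N) (a : E) : E := actP (fst g) (actN (snd g) a).

Lemma mixed_act_comp g1 g2 : exists g, forall a, mixed_act g a = mixed_act g2 (mixed_act g1 a).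
Proof.
  destruct g1 as [be1 al1], g2 as [be2 al2]; unfold mixed_act; simpl.
  destruct (lam al2 be1) as [be' al'] eqn:Hlam.
  exists (gmul P be2 be', gmul N al' al1); intro a; simpl.
  rewrite actP_mul, actN_mul, (lam_act _ _ _ _ Hlam); reflexivity.
Qed.

Lemma mixed_act_inv g : exists g', forall a, mixed_act g' (mixed_act g a) = a.
Proof.
  destruct g as [be al]; unfold mixed_act; simpl.
  destruct (lam (ginv N al) (ginv P be)) as [be' al'] eqn:Hlam.
  exists (be', al'); intro a; simpl.
  rewrite <- (lam_act _ _ _ _ Hlam), actP_invK, actN_invK; reflexivity.
Qed.

Lemma Sy_restr_family t : Sy t <-> restr_family A mixed_act t.
Proof.
  split.
  - induction 1 as [t u (al & x & Hx & Hu) Htu | t u (be & x & Hx & Hu) Htu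
                   | t t1 t2 _ (g1 & x1 & Hx1 & Ht1) _ (g2 & x2 & Hx2 & Ht2) Hcd Ht].
    + exists (gone P, al), x; split; [exact Hx|].
      rewrite Htu, Hu; apply restr_eq_on; intros a _; symmetry; apply actP_one.
    + exists (be, gone N), x; split; [exact Hx|].
      rewrite Htu, Hu; apply restr_eq_on; intros a _; unfold mixed_act; simpl.
      rewrite actN_one; reflexivity.
    + destruct (mixed_act_comp g1 g2) as [g Hg]; exists g, x1; split; [exact Hx1|].
      rewrite Ht1, Ht2 in *; rewrite cod_restr, dom_restr in Hcd.
      rewrite Ht, bcomp_restr by exact Hcd; apply restr_eq_on; intros a _; symmetry; apply Hg.
  - intros ([be al] & x & Hx & Ht).
    apply (cc_comp _ _ t (restr (actN al) x) (restr (actP be) (image (actN al) x))).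
    + apply (cc_l _ _ _ (restr (actN al) x)); [|reflexivity].
      exists al, x; split; [exact Hx | reflexivity].
    + apply (cc_r _ _ _ (restr (actP be) (image (actN al) x))); [|reflexivity].
      exists be, (image (actN al) x); split; [|reflexivity].
      apply automorphism_es_map; [apply actN_aut | exact Hx].
    + rewrite cod_restr, dom_restr; reflexivity.
    + rewrite Ht, bcomp_restr; reflexivity.
Qed.

Lemma Sy_iso_family : iso_family A Sy.
Proof.
  apply (iso_family_ext A (restr_family A mixed_act)); [intro t; symmetry; apply Sy_restr_family|].
  apply restr_family_iso.
  - intros [be al]; apply automorphism_es_map, (automorphism_comp A (actP be) (actN al));
      [apply actP_aut | apply actN_aut].
  - intros x _; exists (gone P, gone N); intros a _; unfold mixed_act; simpl.
    rewrite actP_one, actN_one; reflexivity.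
  - intros g1 g2 x _; destruct (mixed_act_comp g1 g2) as [g Hg]; exists g; auto.
  - intros g x _; destruct (mixed_act_inv g) as [g' Hg']; exists g'; auto.
Qed.

Lemma actN_fixes_pos_ext al be u w :
  config A u -> config A w -> subpos A u w ->
  (forall a, u a -> actN al a = actP be a) -> fixes (actN al) w.
Proof.
  intros Hu Hw Huw Hag; apply (proj2 (actN_neg al) u w Hu Hw); [|exact Huw].
  exact (neg_pos_agree_fixes A _ _ u game_ES (actN_neg al) (actP_pos be) Hu Hag).
Qed.

Lemma actP_fixes_neg_ext be al u w :
  config A u -> config A w -> subneg A u w ->
  (forall a, u a -> actP be a = actN al a) -> fixes (actP be) w.
Proof.
  intros Hu Hw Huw Hag; apply (proj2 (actP_pos be) u w Hu Hw); [|exact Huw].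
  assert (HN : fixes (actN al) u).
  { apply (neg_pos_agree_fixes A _ (actP be) u game_ES (actN_neg al) (actP_pos be) Hu).
    intros a Ha; symmetry; apply Hag, Ha. }
  intros a Ha; rewrite Hag, HN; auto.
Qed.

Lemma Sp_Sm_identity t : Sp t -> Sm t -> exists x, rel_eq t (id_on x).
Proof.
  intros (be & x & Hx & Htp) (al & x' & Hx' & Htn).
  assert (Hxx' : set_eq x x') by (rewrite <- (dom_restr (actP be) x), <- Htp, Htn; apply dom_restr).
  rewrite <- Hxx' in Htn.
  assert (Hag : forall a, x a -> actN al a = actP be a).
  { intros a Ha; assert (Hr : restr (actP be) x a (actP be a)) by (split; auto).
    apply Htp, Htn in Hr as [_ Hr]; symmetry; exact Hr. }
  exists x; rewrite Htn; apply restr_fixes.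
  exact (neg_pos_agree_fixes A _ _ x game_ES (actN_neg al) (actP_pos be) Hx Hag).
Qed.

Lemma Sp_pos_ext t t' : Sp t -> sub_bij_pos A t t' -> Sy t' -> Sp t'.
Proof.
  intros (b0 & x0 & Hx0 & Ht) [Hsub Hpos] Ht'.
  apply Sy_restr_family in Ht' as ([be al] & x' & Hx' & Ht').
  rewrite Ht, Ht' in *; rewrite !dom_restr in Hpos.
  apply sub_bij_restr in Hsub as [_ Hag]; unfold mixed_act in Hag; simpl in Hag.
  assert (HN : fixes (actN al) x').
  { apply (actN_fixes_pos_ext al (gmul P (ginv P be) b0) x0); auto.
    intros a Ha; rewrite actP_mul, <- Hag by exact Ha.
    symmetry; apply actP_invK. }
  exists be, x'; split; [exact Hx'|]; rewrite Ht'.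
  apply restr_eq_on; intros a Ha; unfold mixed_act; simpl.
  rewrite HN; auto.
Qed.

Lemma Sm_neg_ext t t' : Sm t -> sub_bij_neg A t t' -> Sy t' -> Sm t'.
Proof.
  intros (a0 & x0 & Hx0 & Ht) [Hsub Hneg] Ht'.
  apply Sy_restr_family in Ht' as ([be al] & x' & Hx' & Ht').
  rewrite Ht, Ht' in *; rewrite !dom_restr in Hneg.
  apply sub_bij_restr in Hsub as [_ Hag]; unfold mixed_act in Hag; simpl in Hag.
  assert (HP : fixes (actP be) (image (actN al) x')).
  { apply (actP_fixes_neg_ext be (gmul N a0 (ginv N al)) (image (actN al) x0)).
    - apply automorphism_es_map; [apply actN_aut | exact Hx0].
    - apply automorphism_es_map; [apply actN_aut | exact Hx'].
    - apply (subneg_image A A); [apply actN_pol | exact Hneg].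
    - intros c (a & Ha & ->); rewrite Hag, actN_mul, actN_invK; auto. }
  exists al, x'; split; [exact Hx'|]; rewrite Ht'.
  apply restr_eq_on; intros a Ha; unfold mixed_act; simpl.
  apply HP; exists a; auto.
Qed.

Lemma game_thin : thin_game A Sy Sp Sm.
Proof.
  split; [exact game_ES|]; split; [exact Sy_iso_family|].
  split; [exact (action_iso_family A P actP actionP)|].
  split; [exact (action_iso_family A N actN actionN)|].
  split; [intros t Ht; apply (cc_r _ _ t t); [exact Ht | reflexivity]|].
  split; [intros t Ht; apply (cc_l _ _ t t); [exact Ht | reflexivity]|].
  split; [exact Sp_Sm_identity|].
  split; [exact Sp_pos_ext | exact Sm_neg_ext].
Qed.

Section Uniform.

Context {S : Type} (sg : ES S) (p : S -> E) (phi : N -> S -> S) (phib : N -> (S -> Prop) -> P).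
Hypothesis uniform : is_uniform A N P actN actP lam sg p phi phib.

Lemma sg_strategy : is_strategy A sg p. Proof. apply uniform. Qed.
Lemma sg_ES : is_ES sg. Proof. apply sg_strategy. Qed.
Lemma p_map : es_map sg A p. Proof. apply sg_strategy. Qed.
Lemma phi_map al : es_map sg sg (phi al). Proof. apply uniform. Qed.

Lemma p_inj x a b : config sg x -> x a -> x b -> p a = p b -> a = b.
Proof. intros Hx; apply (proj2 (proj2 p_map) x Hx). Qed.

Lemma phib_proj al x s : config sg x -> x s -> actP (phib al x) (p (phi al s)) = actN al (p s).
Proof. intros Hx Hs; apply (proj2 (proj1 (proj2 uniform) al) x Hx s Hs). Qed.

Lemma phi_proj al x s :
  config sg x -> x s -> p (phi al s) = actP (ginv P (phib al x)) (actN al (p s)).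
Proof. intros Hx Hs; rewrite <- (phib_proj al x s Hx Hs), actP_invK; reflexivity. Qed.

Lemma phi_one_fixes x : config sg x -> fixes (phi (gone N)) x.
Proof.
  intros Hx s Hs; destruct (proj1 (proj2 (proj2 uniform)) x Hx) as [Him Hone].
  apply (p_inj x _ _ Hx); [apply Him; exists s; auto | exact Hs |].
  pose proof (phib_proj (gone N) x s Hx Hs) as Hproj.
  rewrite Hone, actP_one, actN_one in Hproj; exact Hproj.
Qed.

Lemma phi_mul x al al' s : config sg x -> x s ->
  phi (gmul N al' al) s = phi (snd (lam al' (phib al x))) (phi al s).
Proof.
  intros Hx Hs; pose proof (proj2 (proj2 (proj2 uniform)) al al' x Hx) as Hcomp; cbv zeta in Hcomp.
  destruct (lam al' (phib al x)) as [ga be] eqn:Hlam; simpl in *; destruct Hcomp as [Him Hb].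
  assert (Hy : config sg (image (phi al) x)) by (apply phi_map, Hx).
  assert (Hys : image (phi al) x (phi al s)) by (exists s; auto).
  apply (p_inj (image (phi (gmul N al' al)) x));
    [apply phi_map, Hx | exists s; auto | apply Him; exists (phi al s); auto |].
  apply (act_inj A P actP actionP (phib (gmul N al' al) x)).
  rewrite (phib_proj _ x s Hx Hs), Hb, actP_mul, (phib_proj be _ _ Hy Hys).
  rewrite (phi_proj al x s Hx Hs), actN_mul, <- (lam_act _ _ _ _ Hlam).
  rewrite actP_Kinv; reflexivity.
Qed.

(* With [beta := phib al1 x], axioms (iii) and (i) give [lam al2 (beta^-1 beta) = (_, al2)], which
   turns the composition law of [phi] into plain composition on [x]. *)
Lemma phi_comp al1 al2 x : config sg x ->
  exists al, forall s, x s -> phi al s = phi al2 (phi al1 s).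
Proof.
  intros Hx; destruct (lam al2 (ginv P (phib al1 x))) as [be1 al'] eqn:H1.
  destruct (lam al' (phib al1 x)) as [be2 al''] eqn:H2.
  pose proof (lam_mul_r _ _ _ _ _ _ _ H1 H2) as H3; rewrite gmulVl, lam_one_r in H3.
  injection H3 as _ <-.
  exists (gmul N al' al1); intros s Hs; rewrite (phi_mul x) by auto; rewrite H2; reflexivity.
Qed.

Lemma phi_inv al x : config sg x -> exists al', forall s, x s -> phi al' (phi al s) = s.
Proof.
  intros Hx; exists (snd (lam (ginv N al) (phib al x))); intros s Hs.
  rewrite <- (phi_mul x) by auto; rewrite gmulVl; apply (phi_one_fixes x Hx), Hs.
Qed.

Lemma S_phi_iso_family : iso_family sg (S_phi sg N phi).
Proof.
  apply (restr_family_iso sg phi); [exact phi_map | | exact phi_comp | exact phi_inv].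
  intros x Hx; exists (gone N); exact (phi_one_fixes x Hx).
Qed.

Lemma p_sym_map : es_sym_map sg (S_phi sg N phi) A Sy p.
Proof.
  split; [exact p_map|]; intros t (al & x & Hx & Ht).
  apply Sy_restr_family; exists (ginv P (phib al x), al), (image p x).
  split; [apply p_map, Hx|]; rewrite Ht.
  apply push_restr; intros s Hs; apply (phi_proj al x s Hx Hs).
Qed.

(* The defect [actP (phib al y)^-1] of the weak map [phi al] fixes [p x], hence by positivity its
   negative extension [actN al (p y)]. *)
Lemma phi_proj_neg_ext al x y :
  config sg x -> config sg y -> subneg sg x y ->
  fixes (actN al) (image p x) -> fixes (phi al) x ->
  forall s, y s -> p (phi al s) = actN al (p s).
Proof.
  intros Hx Hy Hxy HNx Hphix.
  assert (HPx : fixes (actP (ginv P (phib al y))) (image p x)).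
  { intros c (s & Hs & ->).
    rewrite <- (HNx (p s)) at 1 by (exists s; auto).
    rewrite <- (phi_proj al y s Hy (proj1 Hxy s Hs)), Hphix; auto. }
  assert (Hsn : subneg A (image (actN al) (image p x)) (image (actN al) (image p y))).
  { apply (subneg_image A A); [apply actN_pol|].
    apply (subneg_image sg A); [apply p_map | exact Hxy]. }
  rewrite (image_fixes _ _ HNx) in Hsn.
  assert (HPy : fixes (actP (ginv P (phib al y))) (image (actN al) (image p y))).
  { apply (proj2 (actP_pos _) _ _ (proj1 (proj2 p_map) x Hx)); [|exact HPx | exact Hsn].
    apply automorphism_es_map; [apply actN_aut | apply p_map, Hy]. }
  intros s Hs; rewrite (phi_proj al y s Hy Hs).
  apply HPy; exists (p s); split; [exists s|]; auto.
Qed.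

Hypothesis local :
  forall x (al : N), config sg x -> fixes (actN al) (image p x) -> fixes (phi al) x.

Lemma phi_thin x t : config sg x -> sub_bij_pos sg (id_on x) t -> S_phi sg N phi t ->
  exists x', rel_eq t (id_on x').
Proof.
  intros Hx [Hsub Hpos] (al & x' & Hx' & Ht).
  rewrite Ht in Hsub, Hpos; rewrite dom_id, dom_restr in Hpos.
  apply sub_bij_id_restr in Hsub as [Hxx' Hfix].
  assert (HN : fixes (actN al) (image p x')).
  { apply (actN_fixes_pos_ext al (phib al x') (image p x));
      [apply p_map, Hx | apply p_map, Hx' | |].
    - apply (subpos_image sg A); [apply p_map | exact Hpos].
    - intros c (s & Hs & ->); rewrite <- (phib_proj al x' s Hx' (Hxx' s Hs)), Hfix; auto. }
  exists x'; rewrite Ht; apply restr_fixes, local; auto.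
Qed.

Lemma phi_receptive x y z t :
  config sg x -> config sg y -> config sg z -> subneg sg x y -> subneg sg x z ->
  Sy t -> set_eq (dom t) (image p y) -> set_eq (cod t) (image p z) ->
  sub_bij (id_on (image p x)) t ->
  exists c, S_phi sg N phi c /\ set_eq (dom c) y /\ set_eq (cod c) z /\
    sub_bij (id_on x) c /\ rel_eq (push p c) t.
Proof.
  intros Hx Hy Hz Hxy Hxz Ht Hdt Hct Hid.
  assert (Hpx : config A (image p x)) by (apply p_map, Hx).
  assert (Hneg : Sm t).
  { apply (Sm_neg_ext (id_on (image p x))); [| split; [exact Hid|] | exact Ht].
    - exists (gone N), (image p x); split; [exact Hpx|].
      symmetry; apply restr_fixes; intros c _; apply actN_one.
    - rewrite dom_id, Hdt; apply (subneg_image sg A); [apply p_map | exact Hxy]. }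
  destruct Hneg as (al & w & _ & Htn).
  assert (Hwy : set_eq w (image p y)) by (rewrite <- Hdt, Htn; symmetry; apply dom_restr).
  rewrite Hwy in Htn; rewrite Htn in Hid, Hct; rewrite cod_restr in Hct.
  apply sub_bij_id_restr in Hid as [_ HNx].
  assert (Hphix : fixes (phi al) x) by (apply local; auto).
  pose proof (phi_proj_neg_ext al x y Hx Hy Hxy HNx Hphix) as Hproj.
  assert (Hcz : set_eq (image (phi al) y) z).
  { apply (strategy_neg_ext_unique A sg p x _ z sg_strategy Hx);
      [apply phi_map, Hy | exact Hz | | | |].
    - intros s Hs; exists s; split; [apply Hxy, Hs | symmetry; apply Hphix, Hs].
    - apply Hxz.
    - apply (subneg_image sg A); [apply p_map | exact Hxz].
    - rewrite (image_comp_eq_on p (phi al) (actN al) y Hproj); exact Hct. }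
  exists (restr (phi al) y); split; [exists al, y; split; [exact Hy | reflexivity]|].
  split; [apply dom_restr|]; split; [rewrite cod_restr; exact Hcz|]; split.
  - apply sub_bij_id_restr; split; [apply Hxy | exact Hphix].
  - rewrite Htn; apply push_restr, Hproj.
Qed.

Lemma phi_sim_strategy : sim_strategy A Sy sg (S_phi sg N phi) p.
Proof.
  split; [exact sg_ES|]; split; [exact S_phi_iso_family|]; split; [exact p_sym_map|].
  split; [exact sg_strategy|]; split; [exact phi_thin | exact phi_receptive].
Qed.

End Uniform.

End Game.

Theorem proposition6p5 {E S : Type} (A : ES E) (N P : Group)
  (actN : N -> E -> E) (actP : P -> E -> E) (lam : N -> P -> P * N)
  (sg : ES S) (p : S -> E) (phi : N -> S -> S) (phib : N -> (S -> Prop) -> P) :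
  is_game A N P actN actP lam ->
  is_uniform A N P actN actP lam sg p phi phib ->
  (forall x (al : N), config sg x -> fixes (actN al) (image p x) -> fixes (phi al) x) ->
  let Sm := S_act A N actN in
  let Sp := S_act A P actP in
  let Sy := comp_closure Sm Sp in
  thin_game A Sy Sp Sm /\ sim_strategy A Sy sg (S_phi sg N phi) p.
Proof.
  intros game uniform local Sm Sp Sy; split.
  - exact (game_thin A N P actN actP lam game).
  - exact (phi_sim_strategy A N P actN actP lam game sg p phi phib uniform local).
Qed.
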